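(* Let $A$ be a finite skew brace, $k$ a field, $I$ an ideal of $A$, and $(V,\beta,\rho)$ an irreducible representation of $A$ over $k$. Then the restriction $(V,\beta|_I,\rho|_I)$, a representation of the skew brace $I$, is completely reducible. Write $V=W_1\oplus\cdots\oplus W_r$, where $S_1,\dots,S_r$ are pairwise non-equivalent irreducible representations of $I$ and $W_i$ (the homogeneous component of type $S_i$) is the sum of all irreducible $I$-subrepresentations of $V$ equivalent to $S_i$, with $W_i\cong S_i^{\oplus m_i}$. Then: (a) for each $g\in\Lambda_A$, $\varphi_{(\beta,\rho)}(g)$ maps each $W_i$ onto some $W_j$, and the resulting action of $\Lambda_A$ on $\{W_1,\dots,W_r\}$ is transitive; (b) $m_1=\cdots=m_r$ and $\dim_k S_1=\cdots=\dim_k S_r$.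
   Context: A skew brace is a set $A$ with two group operations $\cdot$ and $\circ$ such that $a\circ(b\cdot c)=(a\circ b)\cdot a^{-1}\cdot(a\circ c)$ for all $a,b,c\in A$; here $a^{-1}$ is the inverse in $(A,\cdot)$. For $a\in A$ let $\lambda_a(b)=a^{-1}\cdot(a\circ b)$ and $\lambda^{\mathrm{op}}_a(b)=(a\circ b)\cdot a^{-1}$. Let $\Lambda_A$ be the group on $A\times A$ with multiplication $(a,b)(c,d)=(a\cdot\lambda^{\mathrm{op}}_b(c),\,b\circ d)$. A representation of $A$ over $k$ is a triple $(V,\beta,\rho)$ with $V$ a $k$-vector space, $\beta:(A,\cdot)\to\mathrm{GL}(V)$, $\rho:(A,\circ)\to\mathrm{GL}(V)$ group homomorphisms such that $\beta(\lambda^{\mathrm{op}}_a(b))=\rho(a)\beta(b)\rho(a)^{-1}$ for all $a,b\in A$; it gives $\varphi_{(\beta,\rho)}:\Lambda_A\to\mathrm{GL}(V)$, $(a,b)\mapsto\beta(a)\rho(b)$. A subrepresentation is a subspace invariant under all $\beta(a),\rho(b)$; irreducible means $V\neq0$ with no subrepresentations other than $0,V$; completely reducible means a direct sum of irreducible subrepresentations. Two representations $(V_1,\beta_1,\rho_1),(V_2,\beta_2,\rho_2)$ are equivalent if there is a linear isomorphism $T:V_1\to V_2$ with $T\beta_1(a)=\beta_2(a)T$ and $T\rho_1(a)=\rho_2(a)T$ for all $a$. An ideal of $A$ is a subset $I$ that is a normal subgroup of both $(A,\cdot)$ and $(A,\circ)$ with $\lambda_a(I)\subseteq I$ for all $a\in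 A$; then $(I,\cdot,\circ)$ is a skew brace. *)

From mathcomp Require Import all_boot all_order all_algebra.
Set Implicit Arguments. Unset Strict Implicit. Unset Printing Implicit Defensive.
Import GRing.Theory.
Local Open Scope ring_scope.

Record skew_brace (T : finType) := SkewBrace {
  dot : T -> T -> T; dinv : T -> T; done : T;
  circ : T -> T -> T; cinv : T -> T; cone : T;
  dotA : forall a b c, dot a (dot b c) = dot (dot a b) c;
  dot1l : forall a, dot done a = a;
  dot1r : forall a, dot a done = a;
  dotVl : forall a, dot (dinv a) a = done;
  dotVr : forall a, dot a (dinv a) = done;
  circA : forall a b c, circ a (circ b c) = circ (circ a b) c;
  circ1l : forall a, circ cone a = a;
  circ1r : forall a, circ a cone = a;
  circVl : forall a, circ (cinv a) a = cone;
  circVr : forall a, circ a (cinv a) = cone;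
  brace_law : forall a b c,
    circ a (dot b c) = dot (dot (circ a b) (dinv a)) (circ a c)
}.

Section SkewBraceDefs.
Variables (T : finType) (B : skew_brace T).

Definition lam (a b : T) : T := dot B (dinv B a) (circ B a b).
Definition lamop (a b : T) : T := dot B (circ B a b) (dinv B a).

Definition is_ideal (I : {set T}) : Prop :=
  [/\ done B \in I,
      (forall x y, x \in I -> y \in I -> dot B x y \in I),
      (forall x, x \in I -> dinv B x \in I) &
      (forall a x, x \in I -> dot B (dot B a x) (dinv B a) \in I)] /\
  [/\ cone B \in I,
      (forall x y, x \in I -> y \in I -> circ B x y \in I),
      (forall x, x \in I -> cinv B x \in I) &
      (forall a x, x \in I -> circ B (circ B a x) (cinv B a) \in I)] /\
  (forall a x, x \in I -> lam a x \in I).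

Variable k : fieldType.

(* (V, beta, rho) is a representation of the sub-skew-brace (D, ., o) of B
   (D = [set: T] for B itself, D = I for an ideal I); values of beta, rho
   outside D are irrelevant. *)
Definition is_rep (D : {set T}) (V : vectType k) (beta rho : T -> 'End(V)) : Prop :=
  [/\ (forall a b, a \in D -> b \in D -> beta (dot B a b) = (beta a \o beta b)%VF),
      (forall a b, a \in D -> b \in D -> rho (circ B a b) = (rho a \o rho b)%VF),
      (forall a, a \in D -> lker (beta a) = 0%VS /\ limg (beta a) = fullv),
      (forall a, a \in D -> lker (rho a) = 0%VS /\ limg (rho a) = fullv) &
      (forall a b, a \in D -> b \in D ->
         beta (lamop a b) = (rho a \o beta b \o (rho a)^-1)%VF)].

Definition is_subrep (D : {set T}) (V : vectType k) (beta rho : T -> 'End(V))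
  (U : {vspace V}) : Prop :=
  forall a, a \in D -> ((beta a @: U)%VS <= U)%VS /\ ((rho a @: U)%VS <= U)%VS.

Definition is_irreducible (D : {set T}) (V : vectType k) (beta rho : T -> 'End(V)) : Prop :=
  (fullv : {vspace V}) <> 0%VS /\
  forall U : {vspace V}, is_subrep D beta rho U -> U = 0%VS \/ U = fullv.

Definition is_irr_subrep (D : {set T}) (V : vectType k) (beta rho : T -> 'End(V))
  (U : {vspace V}) : Prop :=
  [/\ U <> 0%VS, is_subrep D beta rho U &
      forall U', is_subrep D beta rho U' -> (U' <= U)%VS -> U' = 0%VS \/ U' = U].

Definition completely_reducible (D : {set T}) (V : vectType k) (beta rho : T -> 'End(V)) : Prop :=
  exists (s : nat) (U : 'I_s -> {vspace V}),
    [/\ forall j, is_irr_subrep D beta rho (U j),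
        directv (\sum_(j < s) U j) & (\sum_(j < s) U j)%VS = fullv].

Definition rep_equiv (D : {set T}) (V1 V2 : vectType k)
  (b1 r1 : T -> 'End(V1)) (b2 r2 : T -> 'End(V2)) : Prop :=
  exists f : 'Hom(V1, V2),
    [/\ lker f = 0%VS, limg f = fullv,
        (forall a, a \in D -> (f \o b1 a)%VF = (b2 a \o f)%VF) &
        (forall a, a \in D -> (f \o r1 a)%VF = (r2 a \o f)%VF)].

Definition intertwining_emb (D : {set T}) (S V : vectType k)
  (bS rS : T -> 'End(S)) (b r : T -> 'End(V)) (f : 'Hom(S, V)) : Prop :=
  [/\ lker f = 0%VS,
      (forall a, a \in D -> (f \o bS a)%VF = (b a \o f)%VF) &
      (forall a, a \in D -> (f \o rS a)%VF = (r a \o f)%VF)].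

Definition subrep_equiv (D : {set T}) (V S : vectType k)
  (b r : T -> 'End(V)) (bS rS : T -> 'End(S)) (U : {vspace V}) : Prop :=
  exists f : 'Hom(S, V), intertwining_emb D bS rS b r f /\ limg f = U.

(* W is the sum of all irreducible subrepresentations of V equivalent to S
   (in finite dimension: W contains each of them and is a finite sum of them) *)
Definition is_homog_component (D : {set T}) (V S : vectType k)
  (b r : T -> 'End(V)) (bS rS : T -> 'End(S)) (W : {vspace V}) : Prop :=
  (forall U, is_irr_subrep D b r U -> subrep_equiv D b r bS rS U -> (U <= W)%VS) /\
  exists (t : nat) (X : 'I_t -> {vspace V}),
    (forall j, is_irr_subrep D b r (X j) /\ subrep_equiv D b r bS rS (X j)) /\
    W = (\sum_(j < t) X j)%VS.

(* W is equivalent (as a representation of D) to S^{(+) m}: W is the direct sum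
   of the images of m injective intertwiners S -> V *)
Definition is_multiple (D : {set T}) (V S : vectType k)
  (b r : T -> 'End(V)) (bS rS : T -> 'End(S)) (W : {vspace V}) (m : nat) : Prop :=
  exists f : 'I_m -> 'Hom(S, V),
    [/\ forall j, intertwining_emb D bS rS b r (f j),
        directv (\sum_(j < m) limg (f j)) & (\sum_(j < m) limg (f j))%VS = W].

Definition phi (V : vectType k) (beta rho : T -> 'End(V)) (g : T * T) : 'End(V) :=
  (beta g.1 \o rho g.2)%VF.

End SkewBraceDefs.

From mathcomp Require Import all_boot all_order all_algebra.
From Stdlib Require Import Classical.
Set Implicit Arguments. Unset Strict Implicit. Unset Printing Implicit Defensive.
Import GRing.Theory.
Local Open Scope ring_scope.

(* Every [phi g] normalizes the action of the ideal: conjugating [beta x] or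
   [rho x] with [x \in I] by [beta a] or [rho b] gives a product of operators
   [beta y], [rho y] with [y \in I] (this is where the ideal axioms enter).
   Hence [phi g] maps irreducible I-subrepresentations to irreducible ones and
   preserves their equivalence, so it permutes the homogeneous components.
   Since V is irreducible under [Lambda_A], the translates of one irreducible
   I-subrepresentation span V, which gives complete reducibility, and the
   translates of one component span V as well, which forces transitivity.
   Transitivity then equalizes the dimensions of the components and of the
   [S_i], hence also the multiplicities. *)

Lemma lker0_idem_id (k : fieldType) (V : vectType k) (f : 'End(V)) :
  lker f = 0%VS -> (f \o f = f)%VF -> f = \1%VF.
Proof.
move=> /eqP kf ff.
by rewrite -[LHS]comp_lfun1l -(lker0_compVf kf) -comp_lfunA ff.
Qed.

Lemma comp_lfun_conj_inv (k : fieldType) (V : vectType k) (h h' a b : 'End(V)) :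
  (h' \o h = \1)%VF -> (h \o h' = \1)%VF -> (a \o h = h \o b)%VF -> (h' \o a = b \o h')%VF.
Proof.
move=> hK hK' e.
by rewrite -[LHS]comp_lfun1r -hK' comp_lfunA -(comp_lfunA h') e comp_lfunA hK comp_lfun1l.
Qed.

Lemma daddv_pi_lfun_comm (k : fieldType) (V : vectType k) (U R : {vspace V})
    (n : 'End(V)) z :
  (U :&: R = 0)%VS -> (n @: U <= U)%VS -> (n @: R <= R)%VS -> z \in (U + R)%VS ->
  daddv_pi U R (n z) = n (daddv_pi U R z).
Proof.
move=> UR0 nU nR zUR.
have piR x : x \in R -> daddv_pi U R x = 0.
  move=> Rx; have RU0 : (R :&: U = 0)%VS by rewrite capvC.
  apply: (addIr x); rewrite add0r -{3}(daddv_pi_add UR0 (subvP (addvSr U R) x Rx)).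
  by rewrite (daddv_pi_id RU0 Rx).
rewrite -{1}(daddv_pi_add UR0 zUR) !linearD /= (piR (n (daddv_pi R U z))) ?addr0.
  by rewrite daddv_pi_id // (subvP nU) ?memv_img ?memv_pi.
by rewrite (subvP nR) ?memv_img ?memv_pi.
Qed.

Section SkewBraceIdeal.
Variables (T : finType) (B : skew_brace T) (I : {set T}).

Lemma dinvK a : dinv B (dinv B a) = a.
Proof. by rewrite -[RHS](dot1l B) -(dotVl B (dinv B a)) -dotA dotVl dot1r. Qed.

Lemma cinvK a : cinv B (cinv B a) = a.
Proof. by rewrite -[RHS](circ1l B) -(circVl B (cinv B a)) -circA circVl circ1r. Qed.

Lemma dot_lam a b : dot B a (lam B a b) = circ B a b.
Proof. by rewrite /lam dotA dotVr dot1l. Qed.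

Hypothesis HI : is_ideal B I.

Lemma ideal_dot x y : x \in I -> y \in I -> dot B x y \in I.
Proof. by case: HI => [[_ h _ _] _]; apply: h. Qed.

Lemma ideal_dinv x : x \in I -> dinv B x \in I.
Proof. by case: HI => [[_ _ h _] _]; apply: h. Qed.

Lemma ideal_conj a x : x \in I -> dot B (dot B a x) (dinv B a) \in I.
Proof. by case: HI => [[_ _ _ h] _]; apply: h. Qed.

Lemma ideal_circ_conj a x : x \in I -> circ B (circ B a x) (cinv B a) \in I.
Proof. by case: HI => [_ [[_ _ _ h] _]]; apply: h. Qed.

Lemma ideal_lam a x : x \in I -> lam B a x \in I.
Proof. by case: HI => [_ [_ h]]; apply: h. Qed.

Lemma ideal_conjV a x : x \in I -> dot B (dinv B a) (dot B x a) \in I.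
Proof. by move=> /(ideal_conj (dinv B a)); rewrite dinvK dotA. Qed.

Lemma ideal_circ_conjV a x : x \in I -> circ B (circ B (cinv B a) x) a \in I.
Proof. by move=> /(ideal_circ_conj (cinv B a)); rewrite cinvK. Qed.

Lemma ideal_lamop a x : x \in I -> lamop B a x \in I.
Proof. by move=> xI; rewrite /lamop -dot_lam; apply/ideal_conj/ideal_lam. Qed.

Lemma ideal_dinv_lamop a x : x \in I -> dot B (dinv B a) (lamop B x a) \in I.
Proof.
move=> xI; rewrite /lamop; set y := circ B (circ B (cinv B a) x) a.
have -> : circ B x a = dot B a (lam B a y) by rewrite dot_lam /y !circA circVr circ1l.
rewrite !dotA dotVl dot1l.
by apply: ideal_dot; [apply/ideal_lam/ideal_circ_conjV | apply: ideal_dinv].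
Qed.

End SkewBraceIdeal.

Section Representation.
Variables (T : finType) (B : skew_brace T) (k : fieldType).
Variables (V : vectType k) (beta rho : T -> 'End(V)).
Hypothesis Hrep : is_rep B [set: T] beta rho.

Lemma rep_betaM a b : beta (dot B a b) = (beta a \o beta b)%VF.
Proof. by case: Hrep => h _ _ _ _; apply: h; rewrite in_setT. Qed.

Lemma rep_rhoM a b : rho (circ B a b) = (rho a \o rho b)%VF.
Proof. by case: Hrep => _ h _ _ _; apply: h; rewrite in_setT. Qed.

Lemma rep_beta1 : beta (done B) = \1%VF.
Proof.
apply: lker0_idem_id; last by rewrite -rep_betaM dot1l.
by case: Hrep => _ _ h _ _; case: (h (done B)); rewrite ?in_setT.
Qed.

Lemma rep_rho1 : rho (cone B) = \1%VF.
Proof.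
apply: lker0_idem_id; last by rewrite -rep_rhoM circ1l.
by case: Hrep => _ _ _ h _; case: (h (cone B)); rewrite ?in_setT.
Qed.

Lemma rep_rho_beta a b : (rho a \o beta b = beta (lamop B a b) \o rho a)%VF.
Proof.
have /eqP ka : lker (rho a) == 0%VS.
  by case: Hrep => _ _ _ h _; case: (h a); rewrite ?in_setT // => ->.
case: Hrep => _ _ _ _ h; rewrite h ?in_setT //.
by rewrite -!comp_lfunA lker0_compVf ?ka // comp_lfun1r.
Qed.

End Representation.

(* Conjugating a generator by [beta a] or [rho b] yields a product of
   generators, so normalization is only stable at the level of words. *)
Section Words.
Variables (T : finType) (k : fieldType) (I : {set T}).

Definition gen_op (W : vectType k) (b r : T -> 'End(W)) (d : bool * T) : 'End(W) :=
  let: (is_beta, a) := d in if is_beta then b a else r a.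

Definition word_op (W : vectType k) (b r : T -> 'End(W)) (w : seq (bool * T)) :=
  foldr (fun d M => gen_op b r d \o M)%VF \1%VF w.

Definition word_over (w : seq (bool * T)) := all (fun d => d.2 \in I) w.

Lemma word_op_cat (W : vectType k) (b r : T -> 'End(W)) w1 w2 :
  word_op b r (w1 ++ w2) = (word_op b r w1 \o word_op b r w2)%VF.
Proof.
elim: w1 => [|d w1 IH] /=; first by rewrite comp_lfun1l.
by rewrite IH comp_lfunA.
Qed.

Lemma word_op_gen (W : vectType k) (b r : T -> 'End(W)) d :
  word_op b r [:: d] = gen_op b r d.
Proof. by rewrite /= comp_lfun1r. Qed.

Definition intertwines (S W : vectType k) (bS rS : T -> 'End(S))
  (b r : T -> 'End(W)) (f : 'Hom(S, W)) :=
  forall w, word_over w -> (f \o word_op bS rS w = word_op b r w \o f)%VF.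

Definition normalizes (W : vectType k) (b r : T -> 'End(W)) (h : 'End(W)) :=
  forall w, word_over w ->
    exists2 w', word_over w' & (word_op b r w \o h = h \o word_op b r w')%VF.

Variables (V : vectType k) (beta rho : T -> 'End(V)).

Lemma subrep_wordsP U :
  is_subrep I beta rho U <-> (forall w, word_over w -> (word_op beta rho w @: U <= U)%VS).
Proof.
split=> [sU|sU a aI]; last first.
  by split; [move: (sU [:: (true, a)]) | move: (sU [:: (false, a)])];
    rewrite word_op_gen /= aI; apply.
elim=> [|[[] a] w IH] /=; first by rewrite lim1g.
all: case/andP => /= aI /IH wU; rewrite limg_comp.
all: by apply: subv_trans (limgS _ wU) _; case: (sU a aI).
Qed.

Lemma intertwining_embP (S : vectType k) (bS rS : T -> 'End(S)) (f : 'Hom(S, V)) :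
  intertwining_emb I bS rS beta rho f <-> lker f = 0%VS /\ intertwines bS rS beta rho f.
Proof.
split=> [[kf hb hr]|[kf hf]]; last first.
  split=> // a aI; [move: (hf [:: (true, a)]) | move: (hf [:: (false, a)])];
  by rewrite !word_op_gen /= aI; apply.
split=> // w; elim: w => [|[[] a] w IH] /=; first by rewrite comp_lfun1l comp_lfun1r.
all: case/andP => aI /IH fw.
all: by rewrite comp_lfunA ?hb ?hr // -comp_lfunA fw comp_lfunA.
Qed.

Lemma normalizes_gen h :
  (forall d, d.2 \in I ->
     exists2 w, word_over w & (gen_op beta rho d \o h = h \o word_op beta rho w)%VF) ->
  normalizes beta rho h.
Proof.
move=> hgen w; elim: w => [|d w IH] /=.
  by move=> _; exists [::]; rewrite //= comp_lfun1l comp_lfun1r.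
case/andP => dI /IH[w1 w1I e1]; have [w2 w2I e2] := hgen d dI.
exists (w2 ++ w1); first by rewrite /word_over all_cat; apply/andP.
by rewrite -comp_lfunA e1 comp_lfunA e2 word_op_cat comp_lfunA.
Qed.

Lemma normalizes_comp h1 h2 :
  normalizes beta rho h1 -> normalizes beta rho h2 -> normalizes beta rho (h1 \o h2)%VF.
Proof.
move=> n1 n2 w /n1[w1 /n2[w2 w2I e2] e1].
by exists w2 => //; rewrite comp_lfunA e1 -comp_lfunA e2 comp_lfunA.
Qed.

End Words.

Section Normalizers.
Variables (T : finType) (B : skew_brace T) (I : {set T}) (k : fieldType).
Hypothesis HI : is_ideal B I.
Variables (V : vectType k) (beta rho : T -> 'End(V)).
Hypothesis Hrep : is_rep B [set: T] beta rho.

Lemma normalizes_beta a : normalizes I beta rho (beta a).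
Proof.
apply: normalizes_gen => -[[] x] /= xI.
  exists [:: (true, dot B (dinv B a) (dot B x a))]; first by rewrite /= ideal_conjV.
  by rewrite word_op_gen /= -!(rep_betaM Hrep) dotA dotVr dot1l.
exists [:: (true, dot B (dinv B a) (lamop B x a)); (false, x)].
  by rewrite /= ideal_dinv_lamop ?xI.
rewrite /= comp_lfun1r (rep_rho_beta Hrep) comp_lfunA -(rep_betaM Hrep).
by rewrite dotA dotVr dot1l.
Qed.

Lemma normalizes_rho b : normalizes I beta rho (rho b).
Proof.
apply: normalizes_gen => -[[] x] /= xI.
  set y := lamop B (cinv B b) x.
  exists [:: (true, y)]; first by rewrite /= ideal_lamop.
  rewrite word_op_gen /=.
  transitivity (rho b \o (beta y \o rho (cinv B b)) \o rho b)%VF.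
    by rewrite -(rep_rho_beta Hrep) !comp_lfunA -(rep_rhoM Hrep) circVr (rep_rho1 Hrep)
      comp_lfun1l.
  by rewrite -!comp_lfunA -(rep_rhoM Hrep) circVl (rep_rho1 Hrep) comp_lfun1r.
exists [:: (false, circ B (circ B (cinv B b) x) b)]; first by rewrite /= ideal_circ_conjV.
by rewrite word_op_gen /= -!(rep_rhoM Hrep) !circA circVr circ1l.
Qed.

Definition phi_inv (g : T * T) : 'End(V) := (rho (cinv B g.2) \o beta (dinv B g.1))%VF.

Lemma normalizes_phi g : normalizes I beta rho (phi beta rho g).
Proof. exact: normalizes_comp (normalizes_beta _) (normalizes_rho _). Qed.

Lemma normalizes_phi_inv g : normalizes I beta rho (phi_inv g).
Proof. exact: normalizes_comp (normalizes_rho _) (normalizes_beta _). Qed.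

Lemma phiK g : (phi_inv g \o phi beta rho g = \1)%VF.
Proof.
rewrite /phi_inv /phi -comp_lfunA (comp_lfunA (beta _)) -(rep_betaM Hrep) dotVl.
by rewrite (rep_beta1 Hrep) comp_lfun1l -(rep_rhoM Hrep) circVl (rep_rho1 Hrep).
Qed.

Lemma phi_invK g : (phi beta rho g \o phi_inv g = \1)%VF.
Proof.
rewrite /phi_inv /phi -comp_lfunA (comp_lfunA (rho _)) -(rep_rhoM Hrep) circVr.
by rewrite (rep_rho1 Hrep) comp_lfun1l -(rep_betaM Hrep) dotVr (rep_beta1 Hrep).
Qed.

End Normalizers.

Section Subrepresentations.
Variables (T : finType) (D : {set T}) (k : fieldType).
Variables (V : vectType k) (beta rho : T -> 'End(V)).
Local Notation subrep := (is_subrep D beta rho).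
Local Notation irr := (is_irr_subrep D beta rho).

Lemma subrep0 : subrep 0%VS.
Proof. by move=> a _; rewrite !limg0 !subvv. Qed.

Lemma subrepD U W : subrep U -> subrep W -> subrep (U + W)%VS.
Proof.
move=> sU sW a aD; case: (sU a aD) (sW a aD) => bU rU [bW rW].
by rewrite !limgD; split; apply: addvS.
Qed.

Lemma subrep_sum (J : Type) (s : seq J) (P : pred J) (F : J -> {vspace V}) :
  (forall j, P j -> subrep (F j)) -> subrep (\sum_(j <- s | P j) F j)%VS.
Proof. by move=> sF; apply: (big_ind subrep) => //; [apply: subrep0 | apply: subrepD]. Qed.

Lemma subrepI U W : subrep U -> subrep W -> subrep (U :&: W)%VS.
Proof.
move=> sU sW a aD; case: (sU a aD) (sW a aD) => bU rU [bW rW].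
by split; apply: subv_trans (limg_cap _ _ _) _; apply: capvS.
Qed.

Lemma subrep_limg (S : vectType k) (bS rS : T -> 'End(S)) (f : 'Hom(S, V)) :
  intertwining_emb D bS rS beta rho f -> subrep (limg f).
Proof.
case=> _ fb fr a aD; rewrite -!limg_comp -fb // -fr // !limg_comp.
by split; apply/limgS/subvf.
Qed.

Lemma irr_subrep_neq0 U : irr U -> (U != 0)%VS.
Proof. by case=> nU _ _; apply/eqP. Qed.

Lemma irr_subrep_cap U W : irr U -> subrep W -> (U :&: W = 0)%VS \/ (U <= W)%VS.
Proof.
case=> _ sU minU sW.
case: (minU (U :&: W)%VS) => [||->|UW]; [exact: subrepI | exact: capvSl | by left |].
by right; rewrite -UW capvSr.
Qed.

Lemma exists_irr_subrep Z : subrep Z -> (Z != 0)%VS -> exists2 U, irr U & (U <= Z)%VS.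
Proof.
elim: {Z}(\dim Z) {-2}Z (leqnn (\dim Z)) => [|n IH] Z dimZ sZ nZ.
  by move: nZ; rewrite -dimv_eq0 -leqn0 dimZ.
case: (classic (exists U, [/\ subrep U, (U <= Z)%VS, U <> 0%VS & U <> Z]%VS)).
  case=> U [sU UZ nU nUZ].
  have dimU : (\dim U <= n)%N.
    rewrite -ltnS (leq_trans _ dimZ) // ltn_neqAle dimvS // andbT.
    by apply/eqP => dimUZ; apply/nUZ/eqP; rewrite -(dimv_leqif_eq UZ) dimUZ.
  have [U' iU' U'U] := IH U dimU sU (introN eqP nU).
  by exists U' => //; apply: subv_trans U'U UZ.
move=> noU; exists Z => //; split=> //; first exact/eqP.
move=> U sU UZ; apply: NNPP => /not_or_and[nU nUZ].
by apply: noU; exists U.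
Qed.

Lemma subrep_equiv_dim (S : vectType k) (bS rS : T -> 'End(S)) U :
  subrep_equiv D beta rho bS rS U -> \dim U = \dim (fullv : {vspace S}).
Proof. by case=> f [[kf _ _] <-]; rewrite limg_dim_eq // kf capv0. Qed.

Lemma subrep_equiv_rep_equiv (S1 S2 : vectType k)
    (b1 r1 : T -> 'End(S1)) (b2 r2 : T -> 'End(S2)) U :
  subrep_equiv D beta rho b1 r1 U -> subrep_equiv D beta rho b2 r2 U ->
  rep_equiv D b1 r1 b2 r2.
Proof.
move=> eq1 eq2; have dim1 := subrep_equiv_dim eq1; have dim2 := subrep_equiv_dim eq2.
case: eq1 eq2 => f1 [[/eqP kf1 f1b f1r] f1U] [f2 [[/eqP kf2 f2b f2r] f2U]].
pose F := (f2^-1 \o f1)%VF.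
have f2F s : f2 (F s) = f1 s by rewrite comp_lfunE limg_lfunVK // f2U -f1U memv_img ?memvf.
clearbody F.
have F_intw (n : 'End(V)) n1 n2 :
    (f1 \o n1 = n \o f1)%VF -> (f2 \o n2 = n \o f2)%VF -> (F \o n1 = n2 \o F)%VF.
  move=> e1 e2; apply/lfunP => s; apply: (lker0P kf2).
  rewrite !comp_lfunE f2F -(comp_lfunE f1) e1 comp_lfunE -(comp_lfunE f2) e2.
  by rewrite comp_lfunE f2F.
have kF : lker F = 0%VS.
  apply/eqP/lker0P => x y eF; apply: (lker0P kf1); by rewrite -!f2F eF.
exists F; split=> // [|a aD|a aD]; last by apply: F_intw; [apply: f1r | apply: f2r].
  by apply/eqP; rewrite eqEdim subvf limg_dim_eq ?kF ?capv0 // -dim1 -dim2 leqnn.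
by apply: F_intw; [apply: f1b | apply: f2b].
Qed.

Lemma irr_subrep_exchange Y U R : irr Y -> irr U -> subrep R ->
  (U <= Y + R)%VS -> ~~ (U <= R)%VS -> (Y <= U + R)%VS.
Proof.
move=> iY [_ sU _] sR UYR.
case: (irr_subrep_cap iY (subrepD sU sR)) => // Y_UR0 /subvPn[u Uu Ru].
have /memv_addP[y Yy [x Rx def_u]] := subvP UYR u Uu.
have : y \in (Y :&: (U + R))%VS.
  by rewrite memv_cap Yy -(addrK x y) -def_u memv_add ?memvN.
by rewrite Y_UR0 memv0 => /eqP y0; move: Ru; rewrite def_u y0 add0r Rx.
Qed.

(* The projection onto [U] along [R], restricted to [Y], is the equivalence. *)
Lemma subrep_equiv_exchange (S : vectType k) (bS rS : T -> 'End(S)) Y U R :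
  subrep_equiv D beta rho bS rS Y -> irr Y -> irr U -> subrep R ->
  (U <= Y + R)%VS -> ~~ (U <= R)%VS -> subrep_equiv D beta rho bS rS U.
Proof.
move=> eqY iY iU sR UYR nUR.
have dimY := subrep_equiv_dim eqY; case: eqY => f [[kf fb fr] fY].
have [UR0 | UR] := irr_subrep_cap iU sR; last by rewrite UR in nUR.
have [YR0 | YR] := irr_subrep_cap iY sR; last first.
  by move: nUR; rewrite (subv_trans UYR) //; move/addv_idPr: YR => ->.
have YUR := irr_subrep_exchange iY iU sR UYR nUR.
have fUR s : f s \in (U + R)%VS by rewrite (subvP YUR) // -fY memv_img ?memvf.
pose q := daddv_pi U R; have [_ sU _] := iU.
have qf_intw (n : 'End(V)) nS : (n @: U <= U)%VS -> (n @: R <= R)%VS ->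
    (f \o nS = n \o f)%VF -> (q \o f \o nS = n \o (q \o f))%VF.
  move=> nU nR e; apply/lfunP => s.
  by rewrite -comp_lfunA e !comp_lfunE daddv_pi_lfun_comm.
have kqf : lker (q \o f)%VF = 0%VS.
  apply/eqP; rewrite -subv0; apply/subvP => s; rewrite memv_ker comp_lfunE => /eqP qfs0.
  have : f s \in (Y :&: R)%VS.
    rewrite memv_cap -fY memv_img ?memvf //= -(daddv_pi_add UR0 (fUR s)) -/q qfs0 add0r.
    exact: memv_pi.
  by rewrite YR0 !memv0 => fs0; rewrite -memv0 -kf memv_ker.
have emb : intertwining_emb D bS rS beta rho (q \o f)%VF.
  split=> // a aD; case: (sU a aD) (sR a aD) => bU rU [bR rR].
    exact: qf_intw bU bR (fb a aD).
  exact: qf_intw rU rR (fr a aD).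
exists (q \o f)%VF; split=> //; have [_ _ minU] := iU.
case: (minU _ (subrep_limg emb)) => [|qf0|//].
  by apply/subvP => _ /memv_imgP[s _ ->]; rewrite comp_lfunE memv_pi.
have : \dim (limg (q \o f)%VF) = \dim (fullv : {vspace S}).
  by rewrite limg_dim_eq // kqf capv0.
by rewrite qf0 dimv0 -dimY => /esym/eqP; rewrite dimv_eq0 => /eqP Y0; case: iY.
Qed.

Lemma irr_subrep_directv (X : eqType) (s : seq X) (Y : X -> {vspace V}) :
  (forall x, irr (Y x)) ->
  exists n (idx : 'I_n -> X), directv (\sum_(j < n) Y (idx j)) /\
    (\sum_(j < n) Y (idx j) = \sum_(x <- s) Y x)%VS.
Proof.
move=> iY; suff [l [dim_l sum_l]] : exists l : seq X,
    \dim (\sum_(x <- l) Y x)%VS = (\sum_(x <- l) \dim (Y x))%N /\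
    (\sum_(x <- l) Y x = \sum_(x <- s) Y x)%VS.
  exists (size l), (tnth (in_tuple l)); rewrite directvE /=.
  rewrite -(big_tnth _ _ _ xpredT Y) -(big_tnth _ _ _ xpredT (fun x => \dim (Y x))).
  by rewrite dim_l sum_l.
elim: s => [|x s [l [dim_l sum_l]]]; first by exists [::]; rewrite !big_nil dimv0.
have sl : subrep (\sum_(x <- l) Y x)%VS by apply: subrep_sum => z _; case: (iY z).
case: (irr_subrep_cap (iY x) sl) => [x_l0|x_l].
  exists (x :: l); rewrite !big_cons sum_l; split=> //.
  by rewrite -sum_l -dim_l -dimv_sum_cap x_l0 dimv0 addn0.
by exists l; rewrite big_cons -sum_l; move/addv_idPr: x_l => ->.
Qed.

Section Types.
Variables (r : nat) (S : 'I_r -> vectType k) (bS rS : forall i, T -> 'End(S i)).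

Definition types_in (P : pred 'I_r) Z := subrep Z /\
  forall U, irr U -> (U <= Z)%VS -> exists2 c, P c & subrep_equiv D beta rho (bS c) (rS c) U.

Lemma types_in0 P : types_in P 0%VS.
Proof. by split=> [|U [nU _ _]]; [exact: subrep0 | rewrite subv0 => /eqP]. Qed.

Lemma types_in_addv P R Y c : types_in P R -> irr Y -> P c ->
  subrep_equiv D beta rho (bS c) (rS c) Y -> types_in P (Y + R)%VS.
Proof.
move=> [sR typesR] iY Pc eqY; split; first by apply: subrepD sR; case: iY.
move=> U iU UYR; have [UR|nUR] := boolP (U <= R)%VS; first exact: typesR.
by exists c => //; apply: subrep_equiv_exchange eqY iY iU sR UYR nUR.
Qed.

Lemma types_in_sum (P : pred 'I_r) R t (X : 'I_t -> {vspace V}) :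
  (forall j, irr (X j) /\ exists2 c, P c & subrep_equiv D beta rho (bS c) (rS c) (X j)) ->
  types_in P R -> types_in P (\sum_(j < t) X j + R)%VS.
Proof.
move=> typesX typesR; elim/big_rec: _ => [|j Z _ typesZ]; first by rewrite add0v.
have [iXj [c Pc eqXj]] := typesX j; rewrite -addvA; exact: types_in_addv iXj Pc eqXj.
Qed.

End Types.

End Subrepresentations.

Section NormalizingAutomorphism.
Variables (T : finType) (D : {set T}) (k : fieldType).
Variables (V : vectType k) (beta rho : T -> 'End(V)).
Local Notation subrep := (is_subrep D beta rho).
Local Notation irr := (is_irr_subrep D beta rho).

Lemma subrep_img (g : 'End(V)) U : normalizes D beta rho g -> subrep U -> subrep (g @: U)%VS.
Proof.
move=> ng /subrep_wordsP sU; apply/subrep_wordsP => w /ng[w' /sU w'U e].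
by rewrite -limg_comp e limg_comp limgS.
Qed.

Variables (h h' : 'End(V)).
Hypotheses (nh : normalizes D beta rho h) (nh' : normalizes D beta rho h').
Hypotheses (hK : (h' \o h = \1)%VF) (hK' : (h \o h' = \1)%VF).

Lemma limgK U : (h' @: (h @: U) = U)%VS.
Proof. by rewrite -limg_comp hK lim1g. Qed.

Lemma limgKV U : (h @: (h' @: U) = U)%VS.
Proof. by rewrite -limg_comp hK' lim1g. Qed.

Lemma irr_subrep_img U : irr U -> irr (h @: U)%VS.
Proof.
case=> nU sU minU; split; [|exact: subrep_img|].
  by apply: contra_not nU => hU0; rewrite -(limgK U) hU0 limg0.
move=> U' sU' U'hU; have h'U'U : (h' @: U' <= U)%VS by rewrite -(limgK U) limgS.
by case: (minU _ (subrep_img nh' sU') h'U'U) => e; [left | right];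
  rewrite -(limgKV U') e ?limg0.
Qed.

Lemma lker0_left_inv : lker h = 0%VS.
Proof.
apply/eqP/lker0P => x y hxy.
by rewrite -[x]id_lfunE -[y]id_lfunE -hK !comp_lfunE hxy.
Qed.

Lemma dimv_img U : \dim (h @: U) = \dim U.
Proof. by rewrite limg_dim_eq // lker0_left_inv capv0. Qed.

(* The witness is [h \o f2 \o f1^-1 \o h' \o g]; it intertwines because
   conjugation by [h] maps words over [D] to words over [D]. *)
Lemma subrep_equiv_img (S S' : vectType k)
    (bS rS : T -> 'End(S)) (bS' rS' : T -> 'End(S')) U1 U2 :
  subrep_equiv D beta rho bS rS U1 -> subrep_equiv D beta rho bS rS U2 ->
  subrep_equiv D beta rho bS' rS' (h @: U1)%VS ->
  subrep_equiv D beta rho bS' rS' (h @: U2)%VS.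
Proof.
case=> f1 [/intertwining_embP[/eqP kf1 f1w] <-] [f2 [/intertwining_embP[/eqP kf2 f2w] <-]].
case=> g [/intertwining_embP[/eqP kg gw] gU].
pose F := (h \o f2 \o f1^-1 \o h' \o g)%VF.
have f1K s : f1 (f1^-1%VF (h' (g s))) = h' (g s).
  by rewrite limg_lfunVK // -(limgK (limg f1)) -gU !memv_img ?memvf.
have h_inj : injective h by apply/lker0P/eqP/lker0_left_inv.
have f1V_full : (f1^-1 @: limg f1 = fullv)%VS.
  by rewrite -limg_comp lker0_compVf ?lim1g.
exists F; split; last by rewrite /F !limg_comp gU limgK f1V_full.
apply/intertwining_embP; split.
  apply/eqP/lker0P => x y; rewrite !comp_lfunE => /h_inj/(lker0P kf2)/(congr1 f1).
  by rewrite !f1K => /(congr1 h); rewrite -!(comp_lfunE h) hK' !id_lfunE => /(lker0P kg).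
move=> w wD; have [w' w'D e] := nh wD; have e' := comp_lfun_conj_inv hK hK' e.
apply/lfunP => s; rewrite !comp_lfunE; set y := f1^-1%VF (h' (g s)).
rewrite -(comp_lfunE g) gw // comp_lfunE -(comp_lfunE h') e' comp_lfunE -f1K -/y.
rewrite -(comp_lfunE _ f1) -f1w // comp_lfunE lker0_lfunK // -(comp_lfunE f2) f2w //.
by rewrite comp_lfunE -(comp_lfunE h) -e comp_lfunE.
Qed.

End NormalizingAutomorphism.

Section Clifford.
Variables (T : finType) (B : skew_brace T) (k : fieldType) (I : {set T}).
Hypothesis HI : is_ideal B I.
Variables (V : vectType k) (beta rho : T -> 'End(V)).
Hypothesis Hrep : is_rep B [set: T] beta rho.
Hypothesis Hirr : is_irreducible [set: T] beta rho.
Local Notation subrep := (is_subrep I beta rho).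
Local Notation irr := (is_irr_subrep I beta rho).
Local Notation phi := (phi beta rho).

Lemma sumv_phi_full U : (U != 0)%VS -> (\sum_(g : T * T) phi g @: U)%VS = fullv.
Proof.
move=> nU; set O := (\sum_(g : T * T) phi g @: U)%VS.
have UO : (U <= O)%VS.
  by rewrite (sumv_sup (done B, cone B)) // /phi /= (rep_beta1 Hrep) (rep_rho1 Hrep)
    comp_lfun1l lim1g.
(* [beta a \o phi g] and [rho a \o phi g] are [phi] of the products
   [(a, 1) * g] and [(1, a) * g] in [Lambda_A]. *)
have sO : is_subrep [set: T] beta rho O.
  move=> a _; split; rewrite limg_sum; apply/subv_sumP => g _; rewrite -limg_comp.
    apply: (sumv_sup (dot B a g.1, g.2)) => //.
    by rewrite /phi /= (rep_betaM Hrep) comp_lfunA.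
  apply: (sumv_sup (lamop B a g.1, circ B a g.2)) => //.
  by rewrite /phi /= (rep_rhoM Hrep) !comp_lfunA (rep_rho_beta Hrep).
case: Hirr => _ /(_ O sO)[O0|//].
by move: UO; rewrite O0 subv0 (negPf nU).
Qed.

Lemma irr_subrep_phi g U : irr U -> irr (phi g @: U)%VS.
Proof.
exact: (irr_subrep_img (normalizes_phi HI Hrep g) (normalizes_phi_inv HI Hrep g)
  (phiK Hrep g) (phi_invK Hrep g)).
Qed.

Lemma rep_completely_reducible : completely_reducible I beta rho.
Proof.
have [nV _] := Hirr; have sV : subrep fullv by move=> a _; rewrite !subvf.
have [U iU _] := exists_irr_subrep sV (introN eqP nV).
have [s [idx [dx sum_idx]]] :=
  irr_subrep_directv (index_enum _) (fun g => irr_subrep_phi g iU).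
exists s, (fun j => phi (idx j) @: U)%VS; split=> // [j|]; first exact: irr_subrep_phi.
by rewrite sum_idx sumv_phi_full ?(irr_subrep_neq0 iU).
Qed.

Section HomogeneousComponents.
Variables (r : nat) (S : 'I_r -> vectType k) (bS rS : forall i, T -> 'End(S i)).
Hypothesis Hne : forall i j, i != j -> ~ rep_equiv I (bS i) (rS i) (bS j) (rS j).
Hypothesis Hcov : forall U, irr U -> exists i, subrep_equiv I beta rho (bS i) (rS i) U.
Hypothesis Hex : forall i, exists U, irr U /\ subrep_equiv I beta rho (bS i) (rS i) U.
Variable W : 'I_r -> {vspace V}.
Hypothesis HW : forall i, is_homog_component I beta rho (bS i) (rS i) (W i).
Local Notation types_in := (types_in I beta rho bS rS).

Lemma homog_sub i U : irr U -> subrep_equiv I beta rho (bS i) (rS i) U -> (U <= W i)%VS.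
Proof. by case: (HW i) => sub_Wi _; apply: sub_Wi. Qed.

Lemma types_in_homog i : types_in (pred1 i) (W i).
Proof.
case: (HW i) => _ [t [X [typesX ->]]]; rewrite -[X in types_in _ X]addv0.
apply: types_in_sum; last exact: types_in0.
by move=> j; have [iXj eqXj] := typesX j; split=> //; exists i; rewrite /= ?eqxx.
Qed.

Lemma types_in_homog_others i : types_in (fun c => c != i) (\sum_(j | j != i) W j)%VS.
Proof.
elim/big_rec: _ => [|j Z ji typesZ]; first exact: types_in0.
case: (HW j) => _ [t [X [typesX ->]]]; apply: types_in_sum typesZ => l.
by have [iXl eqXl] := typesX l; split=> //; exists j.
Qed.

Lemma homog_neq0 i : (W i != 0)%VS.
Proof.
have [U [iU eqU]] := Hex i.
by apply: contraTneq (homog_sub iU eqU) => ->; rewrite subv0 (irr_subrep_neq0 iU).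
Qed.

Lemma homog_cap_others i : (W i :&: \sum_(j | j != i) W j = 0)%VS.
Proof.
apply/eqP; apply: contraT => nZ.
have [[sWi typesWi] [sWo typesWo]] := (types_in_homog i, types_in_homog_others i).
have [U iU UZ] := exists_irr_subrep (subrepI sWi sWo) nZ.
have [_ /eqP -> eq1] := typesWi U iU (subv_trans UZ (capvSl _ _)).
have [c ci eq2] := typesWo U iU (subv_trans UZ (capvSr _ _)).
by case: (Hne (i := i) (j := c)); [rewrite eq_sym | apply: subrep_equiv_rep_equiv eq1 eq2].
Qed.

Lemma homog_directv : directv (\sum_(i < r) W i).
Proof. by apply/directv_sumP => i _; apply: homog_cap_others. Qed.

Lemma homog_sum_full : (\sum_(i < r) W i)%VS = fullv.
Proof.
apply/eqP; rewrite eqEsubv subvf /=.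
have [s [U [iU _ <-]]] := rep_completely_reducible.
apply/subv_sumP => j _; have [c eqUj] := Hcov (iU j).
by apply: (sumv_sup c) => //; apply: homog_sub eqUj.
Qed.

Lemma homog_multiple i : exists m, is_multiple I beta rho (bS i) (rS i) (W i) m.
Proof.
case: (HW i) => _ [t [X [typesX defWi]]].
have [s [idx [dx sum_idx]]] := irr_subrep_directv (index_enum _) (fun j => proj1 (typesX j)).
have /fin_all_exists[f hf] : forall j : 'I_s, exists f : 'Hom(S i, V),
    intertwining_emb I (bS i) (rS i) beta rho f /\ limg f = X (idx j).
  by move=> j; case: (typesX (idx j)) => _ [f hf]; exists f.
have limg_f : (\sum_(j < s) limg (f j) = \sum_(j < s) X (idx j))%VS.
  by apply: eq_bigr => j _; case: (hf j).
have dim_f : (\sum_(j < s) \dim (limg (f j)) = \sum_(j < s) \dim (X (idx j)))%N.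
  by apply: eq_bigr => j _; case: (hf j) => _ ->.
exists s, f; split; first by move=> j; case: (hf j).
  by move: dx; rewrite !directvE /= limg_f dim_f.
by rewrite limg_f sum_idx defWi.
Qed.

Lemma dimv_multiple i m : is_multiple I beta rho (bS i) (rS i) (W i) m ->
  \dim (W i) = (m * \dim (fullv : {vspace S i}))%N.
Proof.
case=> f [emb_f + <-]; rewrite directvE /= => /eqP ->.
rewrite (eq_bigr (fun _ => \dim (fullv : {vspace S i}))).
  by rewrite big_const_ord iter_addn_0 mulnC.
by move=> j _; case: (emb_f j) => kf _ _; rewrite limg_dim_eq // kf capv0.
Qed.

Section Normalizing.
Variables (h h' : 'End(V)).
Hypotheses (nh : normalizes I beta rho h) (nh' : normalizes I beta rho h').
Hypotheses (hK : (h' \o h = \1)%VF) (hK' : (h \o h' = \1)%VF).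

Lemma homog_img_sub i : exists j, (h @: W i <= W j)%VS.
Proof.
case: (HW i) => _ [[|t] [X [typesX ->]]].
  by exists i; rewrite big_ord0 limg0 sub0v.
have [iX0 eqX0] := typesX ord0.
have [j eqhX0] := Hcov (irr_subrep_img nh nh' hK hK' iX0).
exists j; rewrite limg_sum; apply/subv_sumP => l _; have [iXl eqXl] := typesX l.
apply: homog_sub (irr_subrep_img nh nh' hK hK' iXl) _.
exact: (subrep_equiv_img nh hK hK' eqX0 eqXl eqhX0).
Qed.

End Normalizing.

Lemma homog_img (h h' : 'End(V)) :
  normalizes I beta rho h -> normalizes I beta rho h' ->
  (h' \o h = \1)%VF -> (h \o h' = \1)%VF ->
  forall i, exists j, (h @: W i = W j)%VS.
Proof.
move=> nh nh' hK hK' i.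
have [j hWij] := homog_img_sub nh nh' hK hK' i.
have [i' h'Wji'] := homog_img_sub nh' nh hK' hK j.
have Wii' : (W i <= W i')%VS.
  by apply: subv_trans h'Wji'; rewrite -[X in (X <= _)%VS](limgK hK) limgS.
have i'i : i' = i.
  apply: contra_eq (homog_neq0 i) => i'i.
  by rewrite -subv0 -(homog_cap_others i) subv_cap subvv (sumv_sup i').
rewrite {}i'i in h'Wji'; exists j; apply/eqP; rewrite eqEsubv hWij /=.
by rewrite -[X in (X <= _)%VS](limgKV hK') limgS.
Qed.

Lemma phi_homog g i : exists j, (phi g @: W i = W j)%VS.
Proof.
exact: (homog_img (normalizes_phi HI Hrep g) (normalizes_phi_inv HI Hrep g)
  (phiK Hrep g) (phi_invK Hrep g)).
Qed.

Lemma phi_homog_transitive i j : exists g, (phi g @: W i = W j)%VS.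
Proof.
suff /existsP[g /eqP] : [exists g : T * T, phi g @: W i == W j]%VS by exists g.
apply: contraT => /existsPn not_ij.
have : (W j <= \sum_(l | l != j) W l)%VS.
  apply: subv_trans (subvf _) _; rewrite -(sumv_phi_full (homog_neq0 i)).
  apply/subv_sumP => g _; have [l el] := phi_homog g i.
  by rewrite el (sumv_sup l) //; apply: contraNneq (not_ij g) => <-; rewrite el.
move/capv_idPl; rewrite homog_cap_others => Wj0.
by move: (homog_neq0 j); rewrite -Wj0 eqxx.
Qed.

Lemma dim_irr_eq i j : \dim (fullv : {vspace S i}) = \dim (fullv : {vspace S j}).
Proof.
have [g phiWij] := phi_homog_transitive i j; have [U [iU eqU]] := Hex i.
have phiUWj : (phi g @: U <= W j)%VS by rewrite -phiWij limgS // homog_sub.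
have [_ /eqP -> eq_phiU] := (types_in_homog j).2 _ (irr_subrep_phi g iU) phiUWj.
by rewrite -(subrep_equiv_dim eqU) -(subrep_equiv_dim eq_phiU) (dimv_img (phiK Hrep g)).
Qed.

Lemma multiplicity_eq (m : 'I_r -> nat) :
  (forall i, is_multiple I beta rho (bS i) (rS i) (W i) (m i)) -> forall i j, m i = m j.
Proof.
move=> mult_m i j; have [g phiWij] := phi_homog_transitive i j.
have := dimv_img (phiK Hrep g) (W i); rewrite phiWij.
rewrite (dimv_multiple (mult_m i)) (dimv_multiple (mult_m j)) (dim_irr_eq i j) => /eqP.
have [U [iU eqU]] := Hex j.
by rewrite eqn_mul2r -(subrep_equiv_dim eqU) dimv_eq0 (negPf (irr_subrep_neq0 iU)) => /eqP.
Qed.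

End HomogeneousComponents.

End Clifford.

Theorem theorem3p4 (T : finType) (B : skew_brace T) (k : fieldType)
  (I : {set T}) (HI : is_ideal B I)
  (V : vectType k) (beta rho : T -> 'End(V))
  (Hrep : is_rep B [set: T] beta rho)
  (Hirr : is_irreducible [set: T] beta rho) :
  completely_reducible I beta rho /\
  forall (r : nat) (S : 'I_r -> vectType k) (bS rS : forall i, T -> 'End(S i)),
    (forall i, is_rep B I (bS i) (rS i)) ->
    (forall i, is_irreducible I (bS i) (rS i)) ->
    (forall i j, i != j -> ~ rep_equiv I (bS i) (rS i) (bS j) (rS j)) ->
    (forall U, is_irr_subrep I beta rho U ->
       exists i, subrep_equiv I beta rho (bS i) (rS i) U) ->
    (forall i, exists U, is_irr_subrep I beta rho U /\
       subrep_equiv I beta rho (bS i) (rS i) U) ->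
    forall W : 'I_r -> {vspace V},
    (forall i, is_homog_component I beta rho (bS i) (rS i) (W i)) ->
    [/\ directv (\sum_(i < r) W i) /\ (\sum_(i < r) W i)%VS = fullv,
        (exists m : 'I_r -> nat,
           forall i, is_multiple I beta rho (bS i) (rS i) (W i) (m i)),
        (forall (g : T * T) i, exists j, (phi beta rho g @: W i)%VS = W j),
        (forall i j, exists g : T * T, (phi beta rho g @: W i)%VS = W j) &
        (forall m : 'I_r -> nat,
           (forall i, is_multiple I beta rho (bS i) (rS i) (W i) (m i)) ->
           forall i j, m i = m j) /\
        (forall i j, \dim (fullv : {vspace S i}) = \dim (fullv : {vspace S j}))].
Proof.
split=> [|r S bS rS _ _ Hne Hcov Hex W HW].
  exact: (rep_completely_reducible HI Hrep Hirr).
split; first split.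
- exact: (homog_directv Hne HW).
- exact: (homog_sum_full HI Hrep Hirr Hcov HW).
- exact: (fin_all_exists (homog_multiple HW)).
- exact: (phi_homog HI Hrep Hne Hcov Hex HW).
- exact: (phi_homog_transitive HI Hrep Hirr Hne Hcov Hex HW).
split; first exact: (multiplicity_eq HI Hrep Hirr Hne Hcov Hex HW).
exact: (dim_irr_eq HI Hrep Hirr Hne Hcov Hex HW).
Qed.
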